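(* Let $R$ be a quotient root system with base $S$ and let $\Phi \subseteq R^+$ be co-closed. Then $\mathrm{span}_{\mathbb{Z}} \Phi = \mathrm{span}_{\mathbb{Z}} \operatorname{supp} \Phi$.
   Context: A quotient root system (QRS) $R$ is the set of non-zero images of a root system $\Delta$ (with base $\Sigma$) under the orthogonal projection of its ambient Euclidean space onto $(\mathrm{span}\,J)^\perp$ for some $J\subsetneq\Sigma$; its base $S$ consists of the images of $\Sigma\setminus J$, and every root is an integer combination of $S$ with all coefficients $\ge0$ (positive roots, $R^+$) or all $\le0$. The support of a root $\alpha$ is the set of $\theta\in S$ with non-zero coefficient in $\alpha$; $\operatorname{supp}\Phi$ is the union of the supports of the elements of $\Phi$. A subset $\Phi\subseteq R^+$ is co-closed if its complement $\Phi^c=R^+\setminus\Phi$ is closed, i.e. $\alpha,\beta\in\Phi^c$ and $\alpha+\beta\in R$ imply $\alpha+\beta\in\Phi^c$. *)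

From HB Require Import structures.
From mathcomp Require Import all_boot all_order all_algebra.
From mathcomp Require Import reals.
Set Implicit Arguments. Unset Strict Implicit. Unset Printing Implicit Defensive.
Import Order.TTheory GRing.Theory Num.Theory.
Local Open Scope ring_scope.

Section QRS.
Variables (R : realType) (n : nat).
Notation V := 'rV[R]_n.

Definition dot (u v : V) : R := (u *m v^T) 0 0.

Definition refl (a v : V) : V := v - (2 * dot v a / dot a a) *: a.

Definition is_intR (x : R) : Prop := exists z : int, x = z%:~R.

(* a (reduced, crystallographic, finite) root system: the list D of roots *)
Definition is_root_system (D : seq V) : Prop :=
  [/\ (0 : V) \notin D,
      (forall a b, a \in D -> b \in D -> refl a b \in D),
      (forall a b, a \in D -> b \in D -> is_intR (2 * dot b a / dot a a)) &
      (forall a (c : R), a \in D -> c *: a \in D -> c = 1 \/ c = -1)].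

Definition lin_indep (B : seq V) : Prop :=
  uniq B /\ forall c : V -> R, \sum_(s <- B) c s *: s = 0 -> forall s, s \in B -> c s = 0.

Definition nonneg_int_comb (B : seq V) (v : V) : Prop :=
  exists c : V -> int, v = \sum_(s <- B) (c s)%:~R *: s /\ forall s, s \in B -> (0 <= c s)%R.

Definition is_base (D Sig : seq V) : Prop :=
  [/\ {subset Sig <= D}, lin_indep Sig &
      forall a, a \in D -> nonneg_int_comb Sig a \/ nonneg_int_comb Sig (- a)].

Definition is_orth_proj_perp (J : seq V) (P : V -> V) : Prop :=
  forall v, (forall j, j \in J -> dot (P v) j = 0) /\
            exists c : V -> R, v - P v = \sum_(j <- J) c j *: j.

Definition qroot (D : seq V) (P : V -> V) (x : V) : Prop :=
  x != 0 /\ exists2 a, a \in D & P a = x.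

Definition qbase (Sig J : seq V) (P : V -> V) : seq V :=
  [seq P s | s <- Sig & s \notin J].

Definition qpos (D Sig J : seq V) (P : V -> V) (x : V) : Prop :=
  qroot D P x /\ nonneg_int_comb (qbase Sig J P) x.

Definition supp (S : seq V) (x : V) (t : V) : Prop :=
  t \in S /\ exists c : V -> int, x = \sum_(s <- S) (c s)%:~R *: s /\ c t != 0.

Definition suppset (S : seq V) (Phi : V -> Prop) (t : V) : Prop :=
  exists2 x, Phi x & supp S x t.

Definition co_closed (D Sig J : seq V) (P : V -> V) (Phi : V -> Prop) : Prop :=
  forall a b, qpos D Sig J P a -> ~ Phi a -> qpos D Sig J P b -> ~ Phi b ->
    qroot D P (a + b) -> qpos D Sig J P (a + b) /\ ~ Phi (a + b).

Definition zspan (X : V -> Prop) (v : V) : Prop :=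
  exists s : seq (V * int), (forall p, p \in s -> X p.1) /\
    v = \sum_(p <- s) (p.2)%:~R *: p.1.

End QRS.

(* Write L for the Z-span of the roots a of the ambient root system whose
   projection P a lies in Phi, and K for the simple roots outside L.  Every
   positive root with at least two units of K-height is the sum of two
   positive roots each of positive K-height: subtract a simple root s with
   (x, s) > 0 when s is in K, otherwise reflect in s, which lowers the height
   without changing the K-coordinates.  Inducting on this decomposition,
   co-closedness shows that no positive root of positive K-height projects into
   Phi: in the base case the root would lie in L, and so would its single
   K-component.  Hence every simple root in the support of a lift of an element
   of Phi lies in L, and projecting gives supp Phi within span_Z Phi; the other
   inclusion holds because elements of Phi are combinations of their supports. *)

From HB Require Import structures.
From mathcomp Require Import all_boot all_order all_algebra.
From mathcomp Require Import reals boolp.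
From mathcomp Require Import zify ring.
Set Implicit Arguments. Unset Strict Implicit. Unset Printing Implicit Defensive.
Import Order.TTheory GRing.Theory Num.Theory.
Local Open Scope ring_scope.

Section Dot.
Variables (R : realType) (n : nat).
Implicit Types (a : R) (u v w : 'rV[R]_n).

Lemma dotE u v : dot u v = \sum_i u 0 i * v 0 i.
Proof. by rewrite /dot !mxE; apply: eq_bigr => i _; rewrite mxE. Qed.

Lemma dotC u v : dot u v = dot v u.
Proof. by rewrite !dotE; apply: eq_bigr => i _; rewrite mulrC. Qed.

Lemma dotDl u v w : dot (u + v) w = dot u w + dot v w.
Proof. by rewrite /dot mulmxDl mxE. Qed.

Lemma dotZl a u v : dot (a *: u) v = a * dot u v.
Proof. by rewrite /dot -scalemxAl mxE. Qed.

Lemma dotBl u v w : dot (u - v) w = dot u w - dot v w.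
Proof. by rewrite dotDl -scaleN1r dotZl mulN1r. Qed.

Lemma dotDr u v w : dot u (v + w) = dot u v + dot u w.
Proof. by rewrite !(dotC u) dotDl. Qed.

Lemma dotZr a u v : dot u (a *: v) = a * dot u v.
Proof. by rewrite !(dotC u) dotZl. Qed.

Lemma dotBr u v w : dot u (v - w) = dot u v - dot u w.
Proof. by rewrite !(dotC u) dotBl. Qed.

Lemma dot_suml (I : Type) (r : seq I) (F : I -> 'rV[R]_n) v :
  dot (\sum_(i <- r) F i) v = \sum_(i <- r) dot (F i) v.
Proof. by rewrite /dot mulmx_suml summxE. Qed.

Lemma dot_ge0 u : 0 <= dot u u.
Proof. by rewrite dotE; apply: sumr_ge0 => i _; apply: sqr_ge0. Qed.

Lemma dot_eq0 u : (dot u u == 0) = (u == 0).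
Proof.
apply/idP/eqP => [|->]; last by rewrite dotE big1 // => i _; rewrite mxE mul0r.
rewrite dotE psumr_eq0 => [/allP u0|i _]; last exact: sqr_ge0.
apply/rowP => i; have /implyP := u0 i (mem_index_enum _).
by rewrite mxE mulf_eq0 orbb => /(_ isT) /eqP.
Qed.

Lemma dot_gt0 u : u != 0 -> 0 < dot u u.
Proof. by move=> u0; rewrite lt_def dot_eq0 u0 dot_ge0. Qed.

(* Equality case of Cauchy-Schwarz: the vector [dot v v *: u - dot u v *: v]
   has squared norm [dot v v * (dot u u * dot v v - dot u v ^+ 2)]. *)
Lemma dot_sqr_ge_colinear u v : v != 0 -> dot u u * dot v v <= dot u v ^+ 2 ->
  u = (dot u v / dot v v) *: v.
Proof.
move=> v0 CS; have vv0 := dot_gt0 v0.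
set w := dot v v *: u - dot u v *: v.
have ww : dot w w = dot v v * (dot u u * dot v v - dot u v ^+ 2).
  by rewrite /w !(dotBl, dotBr, dotZl, dotZr) (dotC v u); ring.
have : w == 0.
  by rewrite -dot_eq0 eq_le dot_ge0 andbT ww pmulr_rle0 // subr_le0.
rewrite /w subr_eq0 => /eqP wE.
by rewrite mulrC -scalerA -wE scalerA mulVf ?scale1r ?gt_eqF.
Qed.

Lemma reflD w u v : refl w (u + v) = refl w u + refl w v.
Proof. by rewrite /refl dotDl mulrDr mulrDl scalerDl opprD addrACA. Qed.

Lemma reflK w v : w != 0 -> refl w (refl w v) = v.
Proof.
move=> w0; have ww0 : dot w w != 0 by rewrite dot_eq0.
rewrite {1}/refl dotBl dotZl.
have -> : 2 * (dot v w - 2 * dot v w / dot w w * dot w w) / dot w w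
          = - (2 * dot v w / dot w w) by field.
by rewrite /refl scaleNr opprK subrK.
Qed.

End Dot.

Section RootSystem.
Variables (R : realType) (n : nat) (D : seq 'rV[R]_n).
Hypothesis rsD : is_root_system D.
Implicit Types x y a b : 'rV[R]_n.

Lemma root_neq0 x : x \in D -> x != 0.
Proof. by case: rsD => D0 _ _ _ xD; apply: contraNneq D0 => <-. Qed.

Lemma refl_root a b : a \in D -> b \in D -> refl a b \in D.
Proof. by case: rsD => _ reflD _ _; apply: reflD. Qed.

Lemma cartan_int a b : a \in D -> b \in D ->
  exists m : int, 2 * dot b a / dot a a = m%:~R.
Proof. by case: rsD => _ _ cartanD _; apply: cartanD. Qed.

Lemma root_opp a : a \in D -> - a \in D.
Proof.
move=> aD; have := refl_root aD aD; rewrite /refl mulfK ?dot_eq0 ?root_neq0 //.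
by rewrite scalerDl scale1r opprD addrA subrr add0r.
Qed.

Lemma root_subr x y : x \in D -> y \in D -> 0 < dot x y -> x != y -> x - y \in D.
Proof.
move=> xD yD xy0 neq_xy.
have xx0 : 0 < dot x x by rewrite dot_gt0 ?root_neq0.
have yy0 : 0 < dot y y by rewrite dot_gt0 ?root_neq0.
have [p pE] := cartan_int yD xD; have [q qE] := cartan_int xD yD.
have p0 : 0 < p by rewrite -(ltr0z R) -pE !mulr_gt0 ?invr_gt0.
have q0 : 0 < q by rewrite -(ltr0z R) -qE dotC !mulr_gt0 ?invr_gt0.
have [p1 | p1] := eqVneq p 1.
  by have := refl_root yD xD; rewrite /refl pE p1 scale1r.
have [q1 | q1] := eqVneq q 1.
  by have := root_opp (refl_root xD yD); rewrite /refl qE q1 scale1r opprB.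
(* Both Cartan integers are now at least 2, so their product is at least 4,
   which forces equality in Cauchy-Schwarz; reducedness then gives x = y. *)
have ge2 (m : int) : 0 < m -> m != 1 -> 2 <= m by case: m => [[|[|k]]|k].
have pq4 : 4 <= p%:~R * q%:~R :> R.
  by rewrite -intrM (ler_int R 4) (ler_pM _ _ (ge2 p p0 p1) (ge2 q q0 q1)).
have pE' : p%:~R * dot y y = 2 * dot x y by rewrite -pE mulfVK // gt_eqF.
have qE' : q%:~R * dot x x = 2 * dot x y by rewrite -qE (dotC y) mulfVK // gt_eqF.
have /(dot_sqr_ge_colinear (root_neq0 yD)) xE : dot x x * dot y y <= dot x y ^+ 2.
  have sqrE : 4 * dot x y ^+ 2 = p%:~R * q%:~R * (dot x x * dot y y).
    by rewrite (mulrC (dot x x)) mulrACA pE' qE'; ring.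
  rewrite -(ler_pM2l (_ : 0 < 4 :> R)) // sqrE ler_wpM2r //.
  by rewrite mulr_ge0 ?ltW.
have [_ _ _ reduced] := rsD.
have [c1 | cN1] : dot x y / dot y y = 1 \/ dot x y / dot y y = -1.
  by apply: reduced yD _; rewrite -xE.
- by move: neq_xy; rewrite xE c1 scale1r eqxx.
- have : 0 < dot x y / dot y y by rewrite divr_gt0.
  by rewrite cN1 ltr0N1.
Qed.

End RootSystem.

Lemma sumr_gt0_has (T : realDomainType) (I : eqType) (r : seq I) (P : pred I)
    (F : I -> T) :
  0 < \sum_(i <- r | P i) F i -> has (fun i => P i && (0 < F i)) r.
Proof.
apply: contraLR => /hasPn F_le0; rewrite -leNgt big_seq_cond.
by apply: sumr_le0 => i /andP[ir Pi]; move: (F_le0 i ir); rewrite Pi leNgt.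
Qed.

Section Base.
Variables (R : realType) (n : nat) (D Sig : seq 'rV[R]_n).
Hypotheses (rsD : is_root_system D) (baseSig : is_base D Sig).
Implicit Types (x y z s t : 'rV[R]_n) (c d : 'rV[R]_n -> int).
Implicit Types (k : pred 'rV[R]_n) (m : int).

Definition comb c := \sum_(s <- Sig) (c s)%:~R *: s.
Definition height k c := \sum_(s <- Sig | k s) c s.
Definition delta s m : 'rV[R]_n -> int := fun t => if t == s then m else 0.
Definition coef_ge0 c := forall s, s \in Sig -> 0 <= c s.
Definition pos_root x c := [/\ x \in D, x = comb c & coef_ge0 c].
Definition pos_root_meets k x c := pos_root x c /\ 0 < height k c.

Lemma base_uniq : uniq Sig.
Proof. by case: baseSig => _ []. Qed.

Lemma base_root s : s \in Sig -> s \in D.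
Proof. by case: baseSig => SigD _ _; apply: SigD. Qed.

Lemma combD c d : comb (c \+ d) = comb c + comb d.
Proof. by rewrite /comb -big_split; apply: eq_bigr => s _; rewrite intrD scalerDl. Qed.

Lemma combB c d : comb (c \- d) = comb c - comb d.
Proof. by rewrite /comb -sumrB; apply: eq_bigr => s _; rewrite intrB scalerBl. Qed.

Lemma comb_delta s m : s \in Sig -> comb (delta s m) = m%:~R *: s.
Proof.
move=> sS; rewrite /comb (bigD1_seq s) //= ?base_uniq // /delta eqxx big1 ?addr0 //.
by move=> t /negbTE ->; rewrite scale0r.
Qed.

Lemma comb_eq0 c : comb c = 0 -> {in Sig, forall s, c s = 0}.
Proof.
case: baseSig => _ [_ free] _ /free c0 s /c0 /eqP.
by rewrite intr_eq0 => /eqP.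
Qed.

Lemma comb_inj c d : comb c = comb d -> {in Sig, c =1 d}.
Proof.
move=> cd s sS; apply/eqP; rewrite -subr_eq0; apply/eqP.
by apply: (comb_eq0 (c := c \- d)) => //; rewrite combB cd subrr.
Qed.

Lemma heightD k c d : height k (c \+ d) = height k c + height k d.
Proof. by rewrite /height -big_split. Qed.

Lemma heightB k c d : height k (c \- d) = height k c - height k d.
Proof. by rewrite /height -sumrB. Qed.

Lemma height_delta k s m : s \in Sig -> height k (delta s m) = if k s then m else 0.
Proof.
move=> sS; rewrite /height big_mkcond (bigD1_seq s) //= ?base_uniq // /delta eqxx.
by rewrite big1 ?addr0 // => t /negbTE ->; rewrite if_same.
Qed.

Lemma eq_height k c d : {in Sig, c =1 d} -> height k c = height k d.
Proof. by move=> cd; rewrite /height !(big_mkcond k); apply: eq_big_seq => s /cd ->. Qed.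

Lemma height_ge0 k c : coef_ge0 c -> 0 <= height k c.
Proof. by move=> c0; rewrite /height big_seq_cond; apply: sumr_ge0 => s /andP[/c0]. Qed.

Lemma height_ge_coef k c s : coef_ge0 c -> s \in Sig -> k s -> c s <= height k c.
Proof.
move=> c0 sS ks; rewrite /height big_mkcond (bigD1_seq s) //= ?base_uniq // ks lerDl.
by rewrite big_seq_cond; apply: sumr_ge0 => t /andP[/c0 ct _]; case: ifP.
Qed.

Lemma height_le k c : coef_ge0 c -> height k c <= height predT c.
Proof.
move=> c0; rewrite [leRHS](bigID k) /= lerDl big_seq_cond.
by apply: sumr_ge0 => s /andP[/c0].
Qed.

Lemma height_gt0 k c : coef_ge0 c -> 0 < height k c ->
  exists2 s, s \in Sig & k s && (0 < c s).
Proof. by move=> _ /sumr_gt0_has /hasP. Qed.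

Lemma height_eq1 k c : coef_ge0 c -> height k c = 1 ->
  exists2 t, k t & \sum_(s <- Sig | k s) (c s)%:~R *: s = t.
Proof.
move=> c0 c1; have : (\sum_(s <- Sig | k s) `|c s|)%:Z = height k c.
  rewrite (big_morph Posz PoszD (erefl _)) /height !(big_mkcond k).
  by apply: eq_big_seq => s /c0 cs; case: (k s); rewrite ?gez0_abs.
rewrite c1 => -[] /sum_nat_seq_eq1 [t [tS kt ct1 ct0]]; exists t => //.
rewrite big_mkcond (bigD1_seq t) //= ?base_uniq // kt big1_seq ?addr0.
  by rewrite -[c t]gez0_abs ?c0 // ct1 scale1r.
move=> s /andP[st sS]; case: ifP => // ks.
by rewrite -[c s]gez0_abs ?c0 // ct0 // scale0r.
Qed.

Lemma root_sign x : x \in D -> exists c, coef_ge0 c /\ (x = comb c \/ - x = comb c).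
Proof.
by case: baseSig => _ _ sgn /sgn [] [c [xE c0]]; exists c; split => //; [left | right].
Qed.

Lemma coef_gt0_pos_root x c s : x \in D -> x = comb c -> s \in Sig -> 0 < c s ->
  coef_ge0 c.
Proof.
move=> /root_sign [d [d0 [xE | xE]]] cE sS cs0.
  by move=> t tS; rewrite (comb_inj (etrans (esym cE) xE)) ?d0.
have := comb_eq0 (c := c \+ d); rewrite combD -cE -xE subrr => /(_ erefl s sS) /=.
by move/eqP; rewrite gt_eqF // ltr_wpDr ?d0.
Qed.

Lemma exists_base_dot_gt0 x c : pos_root x c ->
  exists2 s, s \in Sig & (0 < c s) && (0 < dot x s).
Proof.
case=> xD xE c0; have : 0 < dot x x by rewrite dot_gt0 ?(root_neq0 rsD).
rewrite {2}xE dotC /comb dot_suml => /sumr_gt0_has /hasP [s sS /=].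
rewrite dotZl => csxs; have cs0 : 0 < c s.
  rewrite lt_def c0 // andbT; apply: contraTneq csxs => ->.
  by rewrite mul0r ltxx.
by exists s; rewrite // cs0 dotC -(pmulr_rgt0 _ (_ : 0 < (c s)%:~R :> R)) ?ltr0z.
Qed.

Lemma refl_base_comb x c s : s \in Sig -> x \in D -> x = comb c ->
  exists m, 2 * dot x s / dot s s = m%:~R /\ refl s x = comb (c \- delta s m).
Proof.
move=> sS xD xE; have [m mE] := cartan_int rsD (base_root sS) xD.
by exists m; rewrite combB comb_delta // /refl mE -xE.
Qed.

Lemma refl_pos_root_meets k x c s : s \in Sig -> ~~ k s -> pos_root_meets k x c ->
  exists m, 2 * dot x s / dot s s = m%:~R /\
            pos_root_meets k (refl s x) (c \- delta s m).
Proof.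
move=> sS ks [[xD xE c0] hk0]; have [m [mE rE]] := refl_base_comb sS xD xE.
have hkE : height k (c \- delta s m) = height k c.
  by rewrite heightB height_delta // (negbTE ks) subr0.
exists m; split => //; split; last by rewrite hkE.
have [t tS /andP[kt ct0]] := height_gt0 c0 hk0.
have rD : refl s x \in D := refl_root rsD (base_root sS) xD.
split=> //; apply: coef_gt0_pos_root rD rE tS _.
have ts : t != s by apply: contraNneq ks => <-.
by rewrite /= /delta (negbTE ts) subr0.
Qed.

Lemma delta_pos_root_meets k s : s \in Sig -> k s -> pos_root_meets k s (delta s 1).
Proof.
move=> sS ks; split; last by rewrite height_delta // ks.
split; [exact: base_root | by rewrite comb_delta // scale1r |].
by move=> t _; rewrite /delta; case: eqP.
Qed.

Lemma pos_root_height_ind (Q : 'rV[R]_n -> ('rV[R]_n -> int) -> Prop) :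
  (forall x c, pos_root x c ->
     (forall y d, pos_root y d -> height predT d < height predT c -> Q y d) ->
     Q x c) ->
  forall x c, pos_root x c -> Q x c.
Proof.
move=> IH x c px; have [N] : exists N : nat, height predT c <= N%:Z.
  by exists `|height predT c|%N; rewrite gez0_abs // height_ge0 //; case: px.
elim: N x c px => [|N IHN] x c px hN; apply: IH px _ => y d py hlt.
  by case: py => _ _ /(height_ge0 predT) d0; lia.
by apply: IHN py _; lia.
Qed.

Lemma pos_root_meets_split k x c : pos_root_meets k x c -> 2 <= height k c ->
  exists y cy z cz,
    [/\ pos_root_meets k y cy, pos_root_meets k z cz & x = y + z].
Proof.
case; move: x c; apply: pos_root_height_ind => x c px IH _ hk2.
have [xD xE c0] := px; have [s sS /andP[cs0 xs0]] := exists_base_dot_gt0 px.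
have sD := base_root sS.
case ks: (k s).
  have xs : x != s.
    apply: contraTneq hk2 => xs; rewrite -ltNge.
    rewrite (eq_height k (comb_inj (c := c) (d := delta s 1) _)).
      by rewrite height_delta // ks.
    by rewrite -xE xs comb_delta // scale1r.
  exists (x - s), (c \- delta s 1), s, (delta s 1).
  split; [| exact: delta_pos_root_meets | by rewrite subrK].
  split; last by rewrite heightB height_delta // ks; lia.
  split; [exact: root_subr | by rewrite combB comb_delta // scale1r -xE |].
  by move=> t tS; rewrite /= /delta; case: eqP => [->|_]; [lia | rewrite subr0 c0].
have hk0 : 0 < height k c by apply: lt_le_trans hk2.
have [m [mE [prx hkx]]] := refl_pos_root_meets sS (negbT ks) (conj px hk0).
have m0 : 0 < m.
  by rewrite -(ltr0z R) -mE !mulr_gt0 ?invr_gt0 ?dot_gt0 ?(root_neq0 rsD).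
have hlt : height predT (c \- delta s m) < height predT c.
  by rewrite heightB height_delta //=; lia.
have hk2' : 2 <= height k (c \- delta s m).
  by rewrite heightB height_delta // ks subr0.
have [y [cy [z [cz [my mz yzE]]]]] := IH _ _ prx hlt hkx hk2'.
have [ky [_ my']] := refl_pos_root_meets sS (negbT ks) my.
have [kz [_ mz']] := refl_pos_root_meets sS (negbT ks) mz.
exists (refl s y), (cy \- delta s ky), (refl s z), (cz \- delta s kz).
split; [exact: my' | exact: mz' |].
by rewrite -reflD -yzE reflK ?(root_neq0 rsD).
Qed.

Lemma pos_root_meets_ind k (Q : 'rV[R]_n -> Prop) :
  (forall x c, pos_root_meets k x c -> height k c = 1 -> Q x) ->
  (forall y cy z cz, pos_root_meets k y cy -> pos_root_meets k z cz ->
     y + z \in D -> Q y -> Q z -> Q (y + z)) ->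
  forall x c, pos_root_meets k x c -> Q x.
Proof.
move=> base step x c [px]; move: x c px.
apply: pos_root_height_ind => x c px IH hk0.
have [hk1 | hk2] : height k c = 1 \/ 2 <= height k c by lia.
  exact: base (conj px hk0) hk1.
have [y [cy [z [cz [[py hy] [pz hz] xyz]]]]] := pos_root_meets_split (conj px hk0) hk2.
have [xD xE _] := px; have [_ yE cy0] := py; have [_ zE cz0] := pz.
have hc : {in Sig, c =1 cy \+ cz} by apply: comb_inj; rewrite combD -xE -yE -zE.
have := eq_height predT hc; rewrite heightD.
have := height_le k cy0; have := height_le k cz0 => lez ley hE.
rewrite xyz in xD *; apply: step (conj py hy) (conj pz hz) xD _ _.
  by apply: IH py _ hy; lia.
by apply: IH pz _ hz; lia.
Qed.

End Base.

Section ZSpan.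
Variables (R : realType) (n : nat).
Implicit Types (X Y : 'rV[R]_n -> Prop) (u v : 'rV[R]_n).

Lemma zspan_in X v : X v -> zspan X v.
Proof. by exists [:: (v, 1)]; split=> [p /[1!inE] /eqP -> //|]; rewrite big_seq1 scale1r. Qed.

Lemma zspan0 X : zspan X 0.
Proof. by exists [::]; rewrite big_nil. Qed.

Lemma zspanD X u v : zspan X u -> zspan X v -> zspan X (u + v).
Proof.
move=> [r [rX ->]] [r' [r'X ->]]; exists (r ++ r'); split; last by rewrite big_cat.
by move=> p; rewrite mem_cat => /orP[/rX|/r'X].
Qed.

Lemma zspanZ X (m : int) u : zspan X u -> zspan X (m%:~R *: u).
Proof.
move=> [r [rX ->]]; exists [seq (p.1, m * p.2) | p <- r]; split.
  by move=> q /mapP[p pr ->]; exact: rX pr.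
by rewrite big_map scaler_sumr; apply: eq_bigr => p _; rewrite intrM scalerA.
Qed.

Lemma zspanB X u v : zspan X u -> zspan X v -> zspan X (u - v).
Proof. by move=> Xu /(zspanZ (-1)); rewrite scaleN1r; apply: zspanD. Qed.

Lemma zspan_sum X (I : Type) (r : seq I) (Q : pred I) (F : I -> 'rV[R]_n) :
  (forall i, Q i -> zspan X (F i)) -> zspan X (\sum_(i <- r | Q i) F i).
Proof. by move=> XF; apply: big_ind => //; [apply: zspan0 | apply: zspanD]. Qed.

Lemma zspan_sub X Y v : (forall u, X u -> zspan Y u) -> zspan X v -> zspan Y v.
Proof.
move=> XY [r [rX ->]]; rewrite big_seq; apply: zspan_sum => p pr.
by apply: zspanZ; apply: XY; apply: rX.
Qed.

End ZSpan.

Lemma big_pred1_uniq (I : eqType) (V : nmodType) (r : seq I) (i0 : I) (F : I -> V) :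
  uniq r -> i0 \in r -> \sum_(i <- r | i == i0) F i = F i0.
Proof. by move=> ur ir; rewrite -big_filter filter_pred1_uniq // big_seq1. Qed.

Lemma big_regroup_uniq (I : eqType) (V : nmodType) (r s : seq I) (F : I -> V) :
  {subset r <= s} -> uniq s ->
  \sum_(i <- r) F i = \sum_(t <- s) \sum_(i <- r | i == t) F i.
Proof.
move=> rs us; rewrite (exchange_big_dep predT) //=; apply: eq_big_seq => i ir.
by rewrite (eq_bigl (fun t => t == i)) ?big_pred1_uniq ?rs // => t; rewrite eq_sym.
Qed.

Section Projection.
Variables (R : realType) (n : nat) (J : seq 'rV[R]_n) (P : 'rV[R]_n -> 'rV[R]_n).
Hypothesis projP : is_orth_proj_perp J P.
Implicit Types (a : R) (u v w : 'rV[R]_n).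

Lemma dot_span_perp w (d : 'rV[R]_n -> R) : {in J, forall j, dot w j = 0} ->
  dot w (\sum_(j <- J) d j *: j) = 0.
Proof.
move=> wJ; rewrite dotC dot_suml big_seq big1 // => j jJ.
by rewrite dotZl dotC wJ ?mulr0.
Qed.

Lemma perp_span_eq0 w : {in J, forall j, dot w j = 0} ->
  (exists d : 'rV[R]_n -> R, w = \sum_(j <- J) d j *: j) -> w = 0.
Proof. by move=> wJ [d wE]; apply/eqP; rewrite -dot_eq0 {2}wE dot_span_perp. Qed.

Lemma proj_perp v : {in J, forall j, dot (P v) j = 0}.
Proof. by case: (projP v). Qed.

Lemma proj_linear a u v : P (a *: u + v) = a *: P u + P v.
Proof.
apply/eqP; rewrite -subr_eq0; apply/eqP/perp_span_eq0.
  by move=> j jJ; rewrite dotBl dotDl dotZl !proj_perp // mulr0 addr0 subrr.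
have [[_ [du uE]] [_ [dv vE]]] := (projP u, projP v).
have [_ [dw wE]] := projP (a *: u + v).
exists (fun j => a * du j + dv j - dw j).
rewrite -[RHS]/(\sum_(j <- J) _) (eq_bigr (fun j => a *: (du j *: j) + dv j *: j - dw j *: j)).
  by rewrite sumrB big_split -scaler_sumr -uE -vE -wE; apply/rowP => i; rewrite !mxE; ring.
by move=> j _; rewrite scalerBl scalerDl scalerA.
Qed.

Lemma projD u v : P (u + v) = P u + P v.
Proof. by rewrite -[u]scale1r proj_linear !scale1r. Qed.

Lemma proj0 : P 0 = 0.
Proof. by apply: (addrI (P 0)); rewrite -projD !addr0. Qed.

Lemma projZ a v : P (a *: v) = a *: P v.
Proof. by rewrite -[a *: v]addr0 proj_linear proj0 addr0. Qed.

Lemma projB u v : P (u - v) = P u - P v.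
Proof. by rewrite projD -scaleN1r projZ scaleN1r. Qed.

Lemma proj_sum (I : Type) (r : seq I) (F : I -> 'rV[R]_n) :
  P (\sum_(i <- r) F i) = \sum_(i <- r) P (F i).
Proof. exact: (big_morph P projD proj0). Qed.

Lemma proj_span v : exists d : 'rV[R]_n -> R, v - P v = \sum_(j <- J) d j *: j.
Proof. by case: (projP v). Qed.

Lemma proj_eq0 j : j \in J -> P j = 0.
Proof.
move=> jJ; have [d jE] := proj_span j.
apply/eqP; rewrite -dot_eq0; apply/eqP.
rewrite {2}(_ : P j = j - (j - P j)); last by rewrite opprB addrC subrK.
by rewrite jE dotBr proj_perp // dot_span_perp ?subrr //; apply: proj_perp.
Qed.

Lemma zspan_proj (X Y : 'rV[R]_n -> Prop) v :
  (forall u, X u -> Y (P u)) -> zspan X v -> zspan Y (P v).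
Proof.
move=> XY [r [rX ->]]; exists [seq (P p.1, p.2) | p <- r]; split.
  by move=> q /mapP[p pr ->]; exact/XY/rX.
by rewrite proj_sum big_map; apply: eq_bigr => p _; rewrite projZ.
Qed.

End Projection.

Section QuotientBase.
Variables (R : realType) (n : nat) (D Sig J : seq 'rV[R]_n).
Variable P : 'rV[R]_n -> 'rV[R]_n.
Hypotheses (baseSig : is_base D Sig) (JSig : {subset J <= Sig}).
Hypothesis projP : is_orth_proj_perp J P.
Implicit Types (x s t : 'rV[R]_n) (c d : 'rV[R]_n -> int).

Notation comb := (comb Sig).
Notation coef_ge0 := (coef_ge0 Sig).
Notation S := (qbase Sig J P).

Lemma proj_sum_base (e : 'rV[R]_n -> R) :
  P (\sum_(s <- Sig) e s *: s) = \sum_(s <- Sig | s \notin J) e s *: P s.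
Proof.
rewrite (proj_sum projP) [RHS]big_mkcond; apply: eq_bigr => s _.
by rewrite (projZ projP); case: ifP => // /negbFE/(proj_eq0 projP) ->; rewrite scaler0.
Qed.

Lemma proj_sum_base_eq0 (e : 'rV[R]_n -> R) : P (\sum_(s <- Sig) e s *: s) = 0 ->
  {in Sig, forall s, s \notin J -> e s = 0}.
Proof.
set w := \sum_(s <- Sig) e s *: s => Pw0 s sS sJ.
have [d] := proj_span projP w; rewrite Pw0 subr0.
rewrite (big_regroup_uniq _ JSig (base_uniq baseSig)) => wE.
have sum0 : \sum_(t <- Sig) (e t - \sum_(j <- J | j == t) d j) *: t = 0.
  rewrite -[RHS](subrr w) {1}/w wE -sumrB; apply: eq_bigr => t _.
  by rewrite scalerBl scaler_suml; congr (_ - _); apply: eq_bigr => j /eqP ->.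
have dJ0 : \sum_(j <- J | j == s) d j = 0.
  rewrite big_seq_cond big_pred0 // => j; apply/andP => -[jJ /eqP js].
  by move: sJ; rewrite -js jJ.
have [_ [_ free] _] := baseSig.
by have /= := free _ sum0 s sS; rewrite dJ0 subr0.
Qed.

Lemma proj_comb_eq0 c : P (comb c) = 0 -> {in Sig, forall s, s \notin J -> c s = 0}.
Proof. by move=> /proj_sum_base_eq0 c0 s sS /(c0 s sS) /eqP; rewrite intr_eq0 => /eqP. Qed.

Lemma proj_comb_inj c d : P (comb c) = P (comb d) ->
  {in Sig, forall s, s \notin J -> c s = d s}.
Proof.
move=> cd s sS sJ; apply/eqP; rewrite -subr_eq0; apply/eqP.
by apply: (proj_comb_eq0 (c := c \- d)) => //; rewrite combB (projB projP) cd subrr.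
Qed.

Lemma proj_base_inj s t : s \in Sig -> t \in Sig -> s \notin J -> t \notin J ->
  P s = P t -> s = t.
Proof.
move=> sS tS sJ tJ st; apply/eqP.
have := proj_comb_inj (c := delta s 1) (d := delta t 1) _ sS sJ.
by rewrite /delta eqxx !(comb_delta baseSig) // !scale1r; case: eqP => // _ /(_ st).
Qed.

Lemma qbase_comb (c : 'rV[R]_n -> int) :
  \sum_(t <- S) (c t)%:~R *: t = P (comb (c \o P)).
Proof. by rewrite big_map big_filter /comb proj_sum_base. Qed.

Lemma qbase_coef x c d : x = P (comb c) -> x = \sum_(t <- S) (d t)%:~R *: t ->
  {in Sig, forall s, s \notin J -> c s = d (P s)}.
Proof. by rewrite qbase_comb => -> /proj_comb_inj. Qed.

Lemma qpos_proj x c : pos_root D Sig x c -> P x != 0 -> qpos D Sig J P (P x).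
Proof.
case=> xD xE c0 Px0; split; first by split => //; exists x.
pose d t := \sum_(s <- Sig | (s \notin J) && (P s == t)) c s.
exists d; split; last first.
  by move=> t _; rewrite /d big_seq_cond; apply: sumr_ge0 => s /and3P[/c0].
rewrite qbase_comb xE !proj_sum_base [LHS]big_seq_cond [RHS]big_seq_cond.
apply: eq_bigr => s /andP[sS sJ]; congr (_%:~R *: _).
rewrite /= /d big_mkcond (bigD1_seq s) ?(base_uniq baseSig) //= sJ eqxx.
rewrite big1_seq ?addr0 // => t /andP[ts tS]; case: ifP => // /andP[tJ /eqP Pts].
by move: ts; rewrite (proj_base_inj tS sS tJ sJ Pts) eqxx.
Qed.

Lemma qpos_lift x a : qpos D Sig J P x -> a \in D -> P a = x ->
  exists c, pos_root D Sig a c.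
Proof.
move=> [[x0 _] [d [xE d0]]] aD Pa.
have [c [c0 [aE | aE]]] := root_sign baseSig aD; first by exists c.
have Pc : P (comb c) = - x by rewrite -aE -scaleN1r (projZ projP) scaleN1r Pa.
have cdP0 : P (comb (c \+ (d \o P))) = 0.
  by rewrite combD (projD projP) Pc xE qbase_comb addNr.
have cJ0 : {in Sig, forall s, s \notin J -> c s = 0}.
  move=> s sS sJ; have /= := proj_comb_eq0 cdP0 sS sJ.
  have : 0 <= d (P s) by apply: d0; apply/mapP; exists s; rewrite // mem_filter sJ.
  by have := c0 s sS; lia.
suff x_eq0 : x = 0 by rewrite x_eq0 eqxx in x0.
rewrite -[x]opprK -Pc /comb proj_sum_base big_seq_cond big1 ?oppr0 // => s.
by case/andP=> sS sJ; rewrite cJ0 // scale0r.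
Qed.

End QuotientBase.

Section CoClosed.
Variables (R : realType) (n : nat) (D Sig J : seq 'rV[R]_n).
Variables (P : 'rV[R]_n -> 'rV[R]_n) (Phi : 'rV[R]_n -> Prop).
Hypotheses (rsD : is_root_system D) (baseSig : is_base D Sig).
Hypotheses (JSig : {subset J <= Sig}) (projP : is_orth_proj_perp J P).
Hypothesis PhiP : forall x, Phi x -> qpos D Sig J P x.
Hypothesis coPhi : co_closed D Sig J P Phi.

Notation S := (qbase Sig J P).

Definition lift_span := zspan (fun a => a \in D /\ Phi (P a)).
Definition off_lift_span : pred 'rV[R]_n := fun s => ~~ `[< lift_span s >].

Lemma not_Phi_projD y cy z cz : pos_root D Sig y cy -> pos_root D Sig z cz ->
  y + z \in D -> ~ Phi (P y) -> ~ Phi (P z) -> ~ Phi (P (y + z)).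
Proof.
move=> py pz yzD nPy nPz; rewrite (projD projP).
have [-> | Py0] := eqVneq (P y) 0; first by rewrite add0r.
have [-> | Pz0] := eqVneq (P z) 0; first by rewrite addr0.
move=> Phyz; have [[yz0 _] _] := PhiP Phyz.
have yzR : qroot D P (P y + P z) by split => //; exists (y + z); rewrite ?(projD projP).
have qy := qpos_proj baseSig JSig projP py Py0.
have qz := qpos_proj baseSig JSig projP pz Pz0.
by have [_] := coPhi qy nPy qz nPz yzR.
Qed.

Lemma off_lift_span_not_Phi x c :
  pos_root_meets D Sig off_lift_span x c -> ~ Phi (P x).
Proof.
move: x c; apply: (pos_root_meets_ind rsD baseSig (Q := fun x => ~ Phi (P x))).
  move=> x c [[xD xE c0] _] c1 Phx.
  have [t /asboolPn tL tE] := height_eq1 baseSig c0 c1; apply: tL; rewrite -tE.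
  have inL : lift_span (\sum_(s <- Sig | ~~ off_lift_span s) (c s)%:~R *: s).
    by apply: zspan_sum => s /negbNE /asboolP sL; apply: zspanZ.
  have := zspanB (zspan_in (conj xD Phx) : lift_span x) inL.
  by rewrite {1}xE /comb (bigID off_lift_span) /= addrK.
by move=> y cy z cz [py _] [pz _]; exact: not_Phi_projD py pz.
Qed.

Lemma supp_zspan t : suppset S Phi t -> zspan Phi t.
Proof.
move=> [x Phx [tS [d [xE dt0]]]]; have [[_ [a aD Pa]] _] := PhiP Phx.
have [c pa] := qpos_lift baseSig JSig projP (PhiP Phx) aD Pa.
have [_ aE c0] := pa.
move: tS dt0 => /mapP[s]; rewrite mem_filter => /andP[sJ sS] -> ds0.
have cs : c s = d (P s).
  by apply: (qbase_coef baseSig JSig projP _ xE) => //; rewrite -Pa aE.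
apply: (zspan_proj projP (X := fun a => a \in D /\ Phi (P a))) => [b [] //|].
apply/asboolP/negPn/negP => off_s; apply: off_lift_span_not_Phi (conj pa _) _.
  apply: lt_le_trans (height_ge_coef baseSig c0 sS off_s).
  by rewrite lt_def c0 // cs ds0.
by rewrite Pa.
Qed.

Lemma Phi_zspan_supp x : Phi x -> zspan (suppset S Phi) x.
Proof.
move=> Phx; have [_ [c [xE c0]]] := PhiP Phx.
exists [seq (t, c t) | t <- S & c t != 0]; split.
  move=> p /mapP[t]; rewrite mem_filter => /andP[ct0 tS] -> /=.
  by exists x => //; split => //; exists c.
rewrite big_map big_filter {1}xE [RHS]big_mkcond /=; apply: eq_bigr => t _.
by have [->|] := eqVneq (c t) 0; rewrite ?mulr0z ?scale0r.
Qed.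

End CoClosed.

Unset Implicit Arguments.

(* The hypothesis that some simple root lies outside [J] only makes
   [qbase Sig J P] non-empty; the argument does not use it. *)
Theorem proposition2p14 (R : realType) (n : nat) (D Sig J : seq 'rV[R]_n)
  (P : 'rV[R]_n -> 'rV[R]_n) (Phi : 'rV[R]_n -> Prop) :
  is_root_system D -> is_base D Sig ->
  {subset J <= Sig} -> (exists2 s, s \in Sig & s \notin J) ->
  is_orth_proj_perp J P ->
  (forall x, Phi x -> qpos D Sig J P x) ->
  co_closed D Sig J P Phi ->
  forall v, zspan Phi v <-> zspan (suppset (qbase Sig J P) Phi) v.
Proof.
move=> rsD baseSig JSig _ projP PhiP coPhi v; split; apply: zspan_sub.
- exact: Phi_zspan_supp PhiP.
- exact: supp_zspan rsD baseSig JSig projP PhiP coPhi.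
Qed.
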